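(* Let $A$ be a Noetherian skew brace (every ascending chain of ideals of $A$ is eventually stationary). Then the set of minimal prime ideals of $A$ is finite.
   Context: A (left) skew brace is a triple $(A,+,\circ)$ where $(A,+)$ and $(A,\circ)$ are groups such that $a\circ(b+c)=a\circ b-a+a\circ c$ for all $a,b,c$; common identity $e$. Put $\lambda_a(b)=-a+a\circ b$, $a*b=-a+a\circ b-b$. An ideal is a normal subgroup $I$ of both $(A,+)$ and $(A,\circ)$ with $\lambda_a(I)\subseteq I$ for all $a$. For subsets $I,J$, $I*J=\{i*j\mid i\in I,j\in J\}$. A prime ideal is a proper ideal $P$ such that for any subsets $I,J$ of $A$, $I*J\subseteq P$ implies $I\subseteq P$ or $J\subseteq P$. A minimal prime ideal is a prime ideal containing no strictly smaller prime ideal. *)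

From Stdlib Require Import List.

Record SkewBrace := {
  sb_car :> Type;
  sb_add : sb_car -> sb_car -> sb_car;
  sb_opp : sb_car -> sb_car;
  sb_circ : sb_car -> sb_car -> sb_car;
  sb_cinv : sb_car -> sb_car;
  sb_e : sb_car;  (* common identity *)
  sb_addA : forall a b c, sb_add a (sb_add b c) = sb_add (sb_add a b) c;
  sb_add0l : forall a, sb_add sb_e a = a;
  sb_add0r : forall a, sb_add a sb_e = a;
  sb_addNl : forall a, sb_add (sb_opp a) a = sb_e;
  sb_addNr : forall a, sb_add a (sb_opp a) = sb_e;
  sb_circA : forall a b c, sb_circ a (sb_circ b c) = sb_circ (sb_circ a b) c;
  sb_circ1l : forall a, sb_circ sb_e a = a;
  sb_circ1r : forall a, sb_circ a sb_e = a;
  sb_circVl : forall a, sb_circ (sb_cinv a) a = sb_e;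
  sb_circVr : forall a, sb_circ a (sb_cinv a) = sb_e;
  sb_compat : forall a b c,
    sb_circ a (sb_add b c) = sb_add (sb_add (sb_circ a b) (sb_opp a)) (sb_circ a c)
}.

Section Defs.
Variable A : SkewBrace.

Definition sb_lambda (a b : A) : A := sb_add A (sb_opp A a) (sb_circ A a b).
Definition sb_star (a b : A) : A :=
  sb_add A (sb_add A (sb_opp A a) (sb_circ A a b)) (sb_opp A b).

Definition sb_subset (I J : A -> Prop) : Prop := forall x, I x -> J x.

Definition is_ideal (I : A -> Prop) : Prop :=
  I (sb_e A)
  /\ (forall x y, I x -> I y -> I (sb_add A x y))
  /\ (forall x, I x -> I (sb_opp A x))
  /\ (forall a x, I x -> I (sb_add A (sb_add A a x) (sb_opp A a)))
  /\ (forall x y, I x -> I y -> I (sb_circ A x y))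
  /\ (forall x, I x -> I (sb_cinv A x))
  /\ (forall a x, I x -> I (sb_circ A (sb_circ A a x) (sb_cinv A a)))
  /\ (forall a x, I x -> I (sb_lambda a x)).

Definition is_prime_ideal (P : A -> Prop) : Prop :=
  is_ideal P /\ (exists x, ~ P x) /\
  forall I J : A -> Prop,
    (forall i j, I i -> J j -> P (sb_star i j)) ->
    sb_subset I P \/ sb_subset J P.

Definition is_minimal_prime_ideal (P : A -> Prop) : Prop :=
  is_prime_ideal P /\
  forall Q, is_prime_ideal Q -> sb_subset Q P -> sb_subset P Q.

Definition noetherian : Prop :=
  forall I : nat -> A -> Prop,
    (forall n, is_ideal (I n)) ->
    (forall n, sb_subset (I n) (I (S n))) ->
    exists N, forall n, N <= n -> forall x, I n x <-> I N x.
End Defs.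

(** By Noetherian induction every ideal [I] has a finite cover: a list of
    primes containing [I] such that every prime containing [I] contains one of
    them.  A prime ideal covers itself and the whole brace is covered by the
    empty list.  Any other ideal [I] admits subsets [X], [Y] with [X * Y ⊆ I]
    but [X, Y ⊄ I]; a prime above [I] then contains the ideal generated by
    [I ∪ X] or the one generated by [I ∪ Y], both strictly larger than [I], so
    concatenating their covers covers [I].  A cover of the ideal generated by
    the empty set contains every minimal prime. *)

From Stdlib Require Import List.
From Stdlib Require Import Classical ClassicalEpsilon.

Section ChainInduction.
Variables (X : Type) (R : X -> X -> Prop).
Hypothesis no_chain : forall f : nat -> X, ~ (forall n, R (f n) (f (S n))).

Lemma no_infinite_chain_ind (Q : X -> Prop) :
  (forall x, (forall y, R x y -> Q y) -> Q x) -> forall x, Q x.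
Proof.
  intros step x0; apply NNPP; intro bad0.
  assert (bad_step : forall x, ~ Q x -> exists y, R x y /\ ~ Q y).
  { intros x bad; apply NNPP; intro none; apply bad, step.
    intros y Rxy; apply NNPP; intro bady; apply none; eauto. }
  set (next := fun x => epsilon (inhabits x0) (fun y => R x y /\ ~ Q y)).
  assert (next_spec : forall x, ~ Q x -> R x (next x) /\ ~ Q (next x)).
  { intros x bad; exact (epsilon_spec _ _ (bad_step x bad)). }
  assert (chain_bad : forall n, ~ Q (Nat.iter n next x0)).
  { induction n as [|n IH]; [exact bad0 | apply next_spec, IH]. }
  apply (no_chain (fun n => Nat.iter n next x0)).
  intro n; apply next_spec, chain_bad.
Qed.

End ChainInduction.

Section PrimeCover.
Variable A : SkewBrace.

Definition ideal_gen (S : A -> Prop) (x : A) : Prop :=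
  forall J, is_ideal A J -> sb_subset A S J -> J x.

Lemma ideal_gen_is_ideal S : is_ideal A (ideal_gen S).
Proof.
  unfold ideal_gen; repeat split; intros; unfold is_ideal in *;
  repeat match goal with H : forall J, (_ /\ _) -> _ -> _ |- _ =>
    specialize (H J ltac:(tauto) ltac:(assumption)) end;
  intuition.
Qed.

Lemma subset_ideal_gen S : sb_subset A S (ideal_gen S).
Proof. intros x Sx J _ SJ; auto. Qed.

Lemma ideal_gen_min S J : is_ideal A J -> sb_subset A S J -> sb_subset A (ideal_gen S) J.
Proof. intros idJ SJ x Sx; apply Sx; auto. Qed.

Definition ideal_join (I X : A -> Prop) : A -> Prop := ideal_gen (fun z => I z \/ X z).

Definition larger_ideal (I J : A -> Prop) : Prop :=
  is_ideal A J /\ sb_subset A I J /\ exists x, J x /\ ~ I x.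

Lemma larger_ideal_join I X : (exists x, X x /\ ~ I x) -> larger_ideal I (ideal_join I X).
Proof.
  intros [x [Xx nIx]]; split; [apply ideal_gen_is_ideal | split].
  - intros z Iz; apply subset_ideal_gen; auto.
  - exists x; split; [apply subset_ideal_gen; auto | exact nIx].
Qed.

Lemma noetherian_no_larger_chain :
  noetherian A -> forall f, ~ (forall n, larger_ideal (f n) (f (S n))).
Proof.
  intros noeth f chain.
  destruct (noeth (fun n => f (S n))) as [N stable].
  - intro n; apply chain.
  - intro n; apply chain.
  - destruct (chain (S N)) as [_ [_ [x [fx nfx]]]].
    apply nfx, (stable (S N)); auto.
Qed.

Lemma not_prime_ideal_split I :
  is_ideal A I -> (exists x, ~ I x) -> ~ is_prime_ideal A I ->
  exists X Y, (forall i j, X i -> Y j -> I (sb_star A i j))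
    /\ (exists x, X x /\ ~ I x) /\ (exists y, Y y /\ ~ I y).
Proof.
  intros idI proper not_prime.
  apply NNPP; intro no_split; apply not_prime; split; [exact idI | split; [exact proper |]].
  intros X Y XY; apply NNPP; intro outside.
  apply no_split; exists X, Y; split; [exact XY | split].
  - apply NNPP; intro nX; apply outside; left.
    intros x Xx; apply NNPP; intro nIx; apply nX; eauto.
  - apply NNPP; intro nY; apply outside; right.
    intros y Yy; apply NNPP; intro nIy; apply nY; eauto.
Qed.

Lemma prime_above_join I X Y P :
  is_prime_ideal A P -> sb_subset A I P ->
  (forall i j, X i -> Y j -> I (sb_star A i j)) ->
  sb_subset A (ideal_join I X) P \/ sb_subset A (ideal_join I Y) P.
Proof.
  intros [idP [_ primeP]] IP XY.
  destruct (primeP X Y) as [XP | YP].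
  - intros i j Xi Yj; apply IP; auto.
  - left; apply ideal_gen_min; [exact idP | intros z [Iz | Xz]; auto].
  - right; apply ideal_gen_min; [exact idP | intros z [Iz | Yz]; auto].
Qed.

Definition primes_cover (I : A -> Prop) (l : list (A -> Prop)) : Prop :=
  (forall Q, In Q l -> is_prime_ideal A Q /\ sb_subset A I Q) /\
  (forall P, is_prime_ideal A P -> sb_subset A I P -> exists Q, In Q l /\ sb_subset A Q P).

Lemma primes_cover_prime P : is_prime_ideal A P -> primes_cover P (P :: nil).
Proof.
  intro primeP; split.
  - intros Q [<- | []]; split; [exact primeP | intros x; auto].
  - intros Q _ PQ; exists P; split; [left |]; auto.
Qed.

Lemma primes_cover_full I : (forall x, I x) -> primes_cover I nil.
Proof.
  intro full; split; [intros Q [] |].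
  intros P [_ [[x nPx] _]] IP; exfalso; apply nPx, IP, full.
Qed.

Lemma primes_cover_app I J1 J2 l1 l2 :
  sb_subset A I J1 -> sb_subset A I J2 ->
  (forall P, is_prime_ideal A P -> sb_subset A I P ->
     sb_subset A J1 P \/ sb_subset A J2 P) ->
  primes_cover J1 l1 -> primes_cover J2 l2 -> primes_cover I (l1 ++ l2).
Proof.
  intros IJ1 IJ2 split_P [l1_primes l1_cover] [l2_primes l2_cover]; split.
  - intros Q inQ; apply in_app_or in inQ as [inQ | inQ];
      [destruct (l1_primes Q inQ) as [primeQ JQ] | destruct (l2_primes Q inQ) as [primeQ JQ]];
      split; auto; intros x Ix; auto.
  - intros P primeP IP.
    destruct (split_P P primeP IP) as [JP | JP];
      [destruct (l1_cover P primeP JP) as [Q [inQ QP]]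
      | destruct (l2_cover P primeP JP) as [Q [inQ QP]]];
      exists Q; split; auto; apply in_or_app; auto.
Qed.

Lemma primes_cover_step I :
  is_ideal A I -> (forall J, larger_ideal I J -> exists l, primes_cover J l) ->
  exists l, primes_cover I l.
Proof.
  intros idI IH.
  destruct (classic (is_prime_ideal A I)) as [primeI | not_prime].
  { exists (I :: nil); apply primes_cover_prime, primeI. }
  destruct (classic (exists x, ~ I x)) as [proper | not_proper].
  2:{ exists nil; apply primes_cover_full.
      intro x; apply NNPP; intro nIx; apply not_proper; eauto. }
  destruct (not_prime_ideal_split I idI proper not_prime) as [X [Y [XY [outX outY]]]].
  destruct (IH _ (larger_ideal_join I X outX)) as [l1 cover1].
  destruct (IH _ (larger_ideal_join I Y outY)) as [l2 cover2].
  exists (l1 ++ l2); apply (primes_cover_app I (ideal_join I X) (ideal_join I Y)); auto.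
  - intros x Ix; apply subset_ideal_gen; auto.
  - intros x Ix; apply subset_ideal_gen; auto.
  - intros P primeP IP; apply prime_above_join; auto.
Qed.

Lemma noetherian_primes_cover :
  noetherian A -> forall I, is_ideal A I -> exists l, primes_cover I l.
Proof.
  intro noeth.
  apply (no_infinite_chain_ind _ larger_ideal (noetherian_no_larger_chain noeth)
           (fun I => is_ideal A I -> exists l, primes_cover I l)).
  intros I IH idI; apply primes_cover_step; auto.
  intros J largerJ; apply IH; [exact largerJ | apply largerJ].
Qed.

End PrimeCover.

Theorem corollary4p21 (A : SkewBrace) :
  noetherian A ->
  exists l : list (A -> Prop),
    forall P, is_minimal_prime_ideal A P ->
      exists Q, In Q l /\ (forall x, P x <-> Q x).
Proof.
  intro noeth.
  set (I0 := ideal_gen A (fun _ => False)).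
  destruct (noetherian_primes_cover A noeth I0 (ideal_gen_is_ideal A _))
    as [l [l_primes l_cover]].
  exists l; intros P [primeP minP].
  destruct (l_cover P primeP) as [Q [inQ QP]].
  { apply ideal_gen_min; [apply primeP | intros x []]. }
  exists Q; split; [exact inQ |].
  intro x; split; [| apply QP].
  apply (minP Q); [apply (l_primes Q inQ) | exact QP].
Qed.
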